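(* Let $K$ be a field of characteristic $0$, let $W\le S_d$ be a permutation group and $\chi$ a one-dimensional character of $W$. For $n\in\mathbb N_0$ let $g_n(\chi;x_0,\dots,x_n)=\sum_{j\in J(n,d,\chi)}x_{j_1}\cdots x_{j_d}$ and let $g(\chi;x_0,x_1,x_2,\dots)=\sum_{j\in J(\mathbb N_0^d,\chi)}x_{j_1}\cdots x_{j_d}$ (a formal infinite sum of monomials). Then each $g_n$ is a symmetric polynomial in $x_0,\dots,x_n$, one has $g(\chi;x_0,\dots,x_n,0,0,\dots)=g_n(\chi;x_0,\dots,x_n)$ for all $n$, so that the sequence $(g_n)_{n\ge0}$ determines a symmetric function in the countably many variables $x_0,x_1,x_2,\dots$; this symmetric function coincides both with the characteristic of the polynomial functor $[\chi]^d(-)$ and with $g(\chi;x_0,x_1,x_2,\dots)$.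
   Context: A one-dimensional character of $W$ is a homomorphism $W\to K^\times$. For a $K$-linear space $E$, $W$ acts on $\otimes^d E$ by $\sigma(x_1\otimes\cdots\otimes x_d)=x_{\sigma^{-1}(1)}\otimes\cdots\otimes x_{\sigma^{-1}(d)}$; ${}_\chi(\otimes^dE)$ is the subspace spanned by all $\chi^{-1}(\sigma)z-\sigma z$ ($\sigma\in W$, $z\in\otimes^dE$); the semi-symmetric power is $[\chi]^d(E)=\otimes^dE/{}_\chi(\otimes^dE)$, with $x_1\chi\cdots\chi x_d$ the image of $x_1\otimes\cdots\otimes x_d$. For a linear map $l\colon E\to E'$, $[\chi]^d(l)$ is the linear map with $x_1\chi\cdots\chi x_d\mapsto l(x_1)\chi\cdots\chi l(x_d)$; this makes $[\chi]^d(-)$ a polynomial functor homogeneous of degree $d$ on finite-dimensional $K$-linear spaces. Index sets: for a well-ordered set $L$, $W$ acts on $L^d$ by $\sigma(i_1,\dots,i_d)=(i_{\sigma^{-1}(1)},\dots,i_{\sigma^{-1}(d)})$; $J(L^d,\chi)$ is the set of those elements $j\in L^d$ which are lexicographically minimal in their $W$-orbit and satisfy $\chi(\sigma)=1$ for all $\sigma$ in the stabilizer $W_j$. $J(n,d,\chi)=J([0,n]^d,\chi)$ with $[0,n]=\{0,1,\dots,n\}$, and $\mathbb N_0=\{0,1,2,\dots\}$. The characteristic of a polynomial functor $F$ homogeneous of degree $d$ is the symmetric function whose specialization $x_{n+1}=x_{n+2}=\cdots=0$ is, for each $n$, the trace of $F(\mathrm{diag}(x_0,\dots,x_n))$ acting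 on $F(K^{n+1})$, regarded as a polynomial in $x_0,\dots,x_n$. *)

From HB Require Import structures.
From mathcomp Require Import all_boot all_order all_algebra all_fingroup.
From mathcomp Require Import mpoly.
Set Implicit Arguments. Unset Strict Implicit. Unset Printing Implicit Defensive.
Import Order.TTheory GRing.Theory.
Local Open Scope ring_scope.

Section SemiSym.
Variable K : fieldType.
Variable d : nat.

Definition one_dim_char (W : {group 'S_d}) (chi : 'S_d -> K) : Prop :=
  (forall s t, s \in W -> t \in W -> chi (s * t)%g = chi s * chi t) /\
  (forall s, s \in W -> chi s != 0).

Definition act_idx (T : Type) (s : 'S_d) (j : d.-tuple T) : d.-tuple T :=
  [tuple tnth j ((s^-1)%g i) | i < d].

Definition lexle (disp : Order.disp_t) (T : orderType disp) (j k : d.-tuple T) : bool :=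
  ((val j : seqlexi T) <= (val k : seqlexi T))%O.

Definition inJ (disp : Order.disp_t) (T : orderType disp)
    (W : {group 'S_d}) (chi : 'S_d -> K) (j : d.-tuple T) : bool :=
  [forall s in W, lexle j (act_idx s j)] &&
  [forall s in W, (act_idx s j == j) ==> (chi s == 1)].

Definition g_n (W : {group 'S_d}) (chi : 'S_d -> K) (n : nat) : {mpoly K[n.+1]} :=
  \sum_(j : d.-tuple 'I_n.+1 | inJ W chi j) \prod_(i < d) 'X_(tnth j i).

(* g(chi; x_0, x_1, ...) is the formal sum over j in J(N_0^d, chi) of the
   monomials x_{j_1}...x_{j_d}.  Its specialization x_{n+1} = x_{n+2} = ... = 0
   kills every monomial containing some x_k with k > n, so it is the (finite)
   sum of the monomials x_{j_1}...x_{j_d} over those j in J(N_0^d, chi)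
   all of whose entries are <= n. *)
Definition g_spec (W : {group 'S_d}) (chi : 'S_d -> K) (n : nat) : {mpoly K[n.+1]} :=
  \sum_(j : d.-tuple 'I_n.+1 | inJ W chi (map_tuple (@nat_of_ord n.+1) j))
     \prod_(i < d) 'X_(tnth j i).

(* ---- the semi-symmetric power [chi]^d(K^m), with row-vector conventions:
   vectors of K^m are row vectors, a linear map l : K^m -> K^m is x |-> x *m l. *)

(* dimension of (x)^d K^m; its standard basis e_{j_1} (x) ... (x) e_{j_d} is
   indexed by j : d.-tuple 'I_m through enum_rank / enum_val *)
Definition tdim (m : nat) := #|{: d.-tuple 'I_m}|.

Definition tensor_map (m : nat) (l : 'M[K]_m) : 'M[K]_(tdim m) :=
  \matrix_(a, b) \prod_(i < d) l (tnth (enum_val a) i) (tnth (enum_val b) i).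

Definition perm_tensor (m : nat) (s : 'S_d) : 'M[K]_(tdim m) :=
  \matrix_(a, b) ((act_idx s (enum_val a) == enum_val b)%:R : K).

Definition chi_sub (W : {group 'S_d}) (chi : 'S_d -> K) (m : nat) : 'M[K]_(tdim m) :=
  (\sum_(s in W) ((chi s)^-1 *: (1%:M : 'M[K]_(tdim m)) - perm_tensor m s))%MS.

(* q : (x)^d K^m -> K^r (z |-> z *m q) is a quotient map by _chi((x)^d K^m):
   surjective with kernel exactly _chi((x)^d K^m); thus K^r is a model of
   [chi]^d(K^m), with x_1 chi ... chi x_d = (x_1 (x) ... (x) x_d) *m q *)
Definition semisym_quotient (W : {group 'S_d}) (chi : 'S_d -> K) (m r : nat)
    (q : 'M[K]_(tdim m, r)) : Prop :=
  row_full q /\ (kermx q == chi_sub W chi m)%MS.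

(* L is [chi]^d(l) in the model q : it sends x_1 chi ... chi x_d to
   l(x_1) chi ... chi l(x_d) *)
Definition induced_map (m r : nat) (q : 'M[K]_(tdim m, r)) (l : 'M[K]_m)
    (L : 'M[K]_r) : Prop :=
  tensor_map l *m q = q *m L.

End SemiSym.

From HB Require Import structures.
From mathcomp Require Import all_boot all_order all_algebra all_fingroup.
From mathcomp Require Import mpoly.
Set Implicit Arguments. Unset Strict Implicit. Unset Printing Implicit Defensive.
Import Order.TTheory GRing.Theory.
Local Open Scope ring_scope.

(* The classes of the tensors e_(j_1) (x) ... (x) e_(j_d), j in J(n,d,chi), form a
   basis of [chi]^d(K^(n+1)).  Modulo _chi one has s.z = chi(s)^-1 z, so the class
   of e_(s.j) is chi(s)^-1 times that of e_j; this is consistent along the W-orbit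
   of j exactly when chi is trivial on the stabiliser of j, and otherwise e_j
   itself lies in _chi.  A diagonal map diag(x) acts on this basis by the
   monomials x_(j_1)...x_(j_d), so its trace is g_n(chi; x), and every other model
   of the quotient yields a conjugate induced map.  Relabelling the variables by a
   permutation and taking lex-minimal representatives permutes J(n,d,chi), which
   makes g_n symmetric; compatibility with g holds because membership in J is
   preserved by monotone relabellings of the index set. *)

Section TupleAction.
Variable d : nat.

Lemma act_idx1 (T : Type) (j : d.-tuple T) : act_idx 1%g j = j.
Proof. by apply: eq_from_tnth => i; rewrite !tnth_map !tnth_ord_tuple invg1 perm1. Qed.

Lemma act_idxM (T : Type) (s t : 'S_d) (j : d.-tuple T) :
  act_idx (s * t)%g j = act_idx t (act_idx s j).
Proof. by apply: eq_from_tnth => i; rewrite !tnth_map !tnth_ord_tuple invMg permM. Qed.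

Definition tuple_action (T : finType) : {action 'S_d &-> d.-tuple T} :=
  @TotalAction _ _ (fun j s => act_idx s j) (@act_idx1 T) (fun j s t => act_idxM s t j).

Lemma tuple_actionE (T : finType) (j : d.-tuple T) s : tuple_action T j s = act_idx s j.
Proof. by []. Qed.

Lemma act_idx_map (T T' : Type) (f : T -> T') s (j : d.-tuple T) :
  act_idx s (map_tuple f j) = map_tuple f (act_idx s j).
Proof. by apply: eq_from_tnth => i; rewrite !tnth_map !tnth_ord_tuple. Qed.

Lemma map_tuple_inj (T T' : Type) (f : T -> T') :
  injective f -> injective (@map_tuple d _ _ f).
Proof. by move=> f_inj j k /(congr1 val) /(inj_map f_inj) /val_inj. Qed.

Lemma prod_act_idx (R : comSemiRingType) (T : Type) (F : T -> R) s (j : d.-tuple T) :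
  \prod_(i < d) F (tnth (act_idx s j) i) = \prod_(i < d) F (tnth j i).
Proof.
rewrite (reindex_inj (@perm_inj _ s)); apply: eq_bigr => i _.
by rewrite tnth_map tnth_ord_tuple permK.
Qed.

Section MonotoneRelabelling.
Variables (disp disp' : Order.disp_t) (T : orderType disp) (T' : orderType disp').
Variable f : T -> T'.
Hypothesis f_mono : {mono f : x y / (x <= y)%O}.

Lemma lexi_map (s1 s2 : seq T) :
  ((map f s1 : seqlexi T') <= (map f s2 : seqlexi T'))%O =
  ((s1 : seqlexi T) <= (s2 : seqlexi T))%O.
Proof. by elim: s1 s2 => [|x s1 IHs] [|y s2] //=; rewrite !lexi_cons !f_mono IHs. Qed.

Lemma inJ_map (K : fieldType) (W : {group 'S_d}) (chi : 'S_d -> K) (j : d.-tuple T) :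
  inJ W chi (map_tuple f j) = inJ W chi j.
Proof.
have f_inj : injective f by move=> x y fxy; apply/le_anti; rewrite -!f_mono fxy lexx.
rewrite /inJ; congr andb; apply: eq_forallb => s; rewrite act_idx_map.
  by rewrite /lexle /= lexi_map.
by rewrite (inj_eq (map_tuple_inj f_inj)).
Qed.

End MonotoneRelabelling.
End TupleAction.

Section QuotientTrace.
Variables (F : fieldType) (n : nat).

Lemma kermx_factor r r0 (q : 'M[F]_(n, r)) (q0 : 'M[F]_(n, r0)) (p0 : 'M[F]_(r0, n)) :
  p0 *m q0 = 1%:M -> (kermx q0 <= kermx q)%MS -> q0 *m (p0 *m q) = q.
Proof.
move=> p0q0 ker_sub; apply/eqP; rewrite mulmxA -subr_eq0 -[X in _ - X]mul1mx -mulmxBl.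
apply/eqP/sub_kermxP/(submx_trans _ ker_sub).
by rewrite sub_kermx mulmxBl mul1mx -mulmxA p0q0 mulmx1 subrr.
Qed.

Lemma mxtrace_quotient_eq r r0 (T : 'M[F]_n) (q : 'M[F]_(n, r)) (q0 : 'M[F]_(n, r0))
    (L : 'M[F]_r) (L0 : 'M[F]_r0) :
  row_full q -> row_full q0 -> (kermx q == kermx q0)%MS ->
  T *m q = q *m L -> T *m q0 = q0 *m L0 -> \tr L = \tr L0.
Proof.
move=> /row_fullP[p pq] /row_fullP[p0 p0q0] /andP[ker_le ker_ge] TL TL0.
have q0E := kermx_factor p0q0 ker_ge; have qE := kermx_factor pq ker_le.
have LE : L = (p *m q0) *m L0 *m (p0 *m q).
  by rewrite -[L]mul1mx -pq -mulmxA -TL -{1}q0E !mulmxA -(mulmxA p T) TL0 !mulmxA.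
by rewrite LE mxtrace_mulC mulmxA -(mulmxA p0) qE p0q0 mul1mx.
Qed.

End QuotientTrace.

Section SemiSymmetricPower.
Variables (K : fieldType) (d : nat) (W : {group 'S_d}) (chi : 'S_d -> K).
Hypothesis chi_char : one_dim_char W chi.

Lemma chiM s t : s \in W -> t \in W -> chi (s * t)%g = chi s * chi t.
Proof. by case: chi_char => chiM _; apply: chiM. Qed.

Lemma chi_neq0 s : s \in W -> chi s != 0.
Proof. by case: chi_char => _ chi_neq0; apply: chi_neq0. Qed.

Lemma chi1 : chi 1%g = 1.
Proof.
apply: (mulfI (chi_neq0 (group1 W))).
by rewrite -chiM ?group1 // mulg1 mulr1.
Qed.

Lemma chiV s : s \in W -> chi s^-1%g = (chi s)^-1.
Proof.
move=> sW; apply: (mulfI (chi_neq0 sW)).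
by rewrite -chiM ?groupV // mulgV chi1 divff ?chi_neq0.
Qed.

Lemma chiJ s t : s \in W -> t \in W -> chi (t ^ s)%g = chi t.
Proof.
move=> sW tW; rewrite conjgE !chiM ?groupM ?groupV // chiV //.
by rewrite mulrCA mulVf ?chi_neq0 ?mulr1.
Qed.

Section IndexTuples.
Variable m : nat.
Local Notation tup := (d.-tuple 'I_m).
Local Notation to := (tuple_action d 'I_m).
Local Notation orbitW j := (orbit to W j).

Definition lexkey (t : tup) : seqlexi 'I_m := val t.

Lemma lexkey_inj : injective lexkey. Proof. exact: val_inj. Qed.

Definition orbit_min (j : tup) : tup :=
  Order.arg_min j (mem (orbitW j)) lexkey.

Definition chi_trivial_stab (j : tup) : bool :=
  [forall s in W, (act_idx s j == j) ==> (chi s == 1)].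

Lemma orbit_min_in j : orbit_min j \in orbitW j.
Proof. by rewrite /orbit_min; case: arg_minP => //; apply: orbit_refl. Qed.

Lemma orbit_min_le j t : t \in orbitW j -> (lexkey (orbit_min j) <= lexkey t)%O.
Proof.
by rewrite /orbit_min; case: arg_minP => [|i _ i_min]; [apply: orbit_refl | apply: i_min].
Qed.

Lemma orbit_min_eq j t : t \in orbitW j -> orbit_min t = orbit_min j.
Proof.
move=> /orbit_eqP jt; apply/lexkey_inj/le_anti.
by rewrite !orbit_min_le //; [rewrite -jt | rewrite jt]; apply: orbit_min_in.
Qed.

Lemma chi_trivial_stab_act j s :
  s \in W -> chi_trivial_stab (act_idx s j) = chi_trivial_stab j.
Proof.
suff imp j' s' : s' \in W -> chi_trivial_stab j' -> chi_trivial_stab (act_idx s' j').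
  move=> sW; apply/idP/idP; last exact: imp.
  by move/(imp _ s^-1%g); rewrite groupV -act_idxM mulgV act_idx1; apply.
move=> s'W /forallP triv; apply/forallP => t; apply/implyP => tW.
apply/implyP => /eqP fix_t; have := triv (t ^ s'^-1)%g.
rewrite groupJ ?groupV // chiJ ?groupV //= => /implyP; apply.
by rewrite conjgE invgK !act_idxM fix_t -act_idxM mulgV act_idx1.
Qed.

Lemma chi_trivial_stab_orbit j t : t \in orbitW j -> chi_trivial_stab t = chi_trivial_stab j.
Proof. by case/orbitP => s sW <-; apply: chi_trivial_stab_act. Qed.

Lemma inJE j : inJ W chi j = (orbit_min j == j) && chi_trivial_stab j.
Proof.
congr andb; apply/forallP/eqP => [lexmin | <- s].
  apply/lexkey_inj/le_anti; rewrite orbit_min_le ?orbit_refl //=.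
  by case/orbitP: (orbit_min_in j) => s sW <-; have := lexmin s; rewrite sW.
apply/implyP => sW; apply: orbit_min_le.
by rewrite -(orbit_eqP (orbit_min_in j)); apply: (mem_orbit _ _ sW).
Qed.

Lemma orbit_min_eqE j t : (orbit_min j == orbit_min t) = (j \in orbitW t).
Proof.
apply/eqP/idP => [jt | /orbit_min_eq //].
by rewrite -(orbit_eqP (orbit_min_in t)) -jt orbit_sym orbit_min_in.
Qed.

Lemma inJ_orbit_min j : inJ W chi (orbit_min j) = chi_trivial_stab j.
Proof.
have j_min := orbit_min_in j.
by rewrite inJE (orbit_min_eq j_min) eqxx (chi_trivial_stab_orbit j_min).
Qed.

Lemma inJ_orbit_inj j1 j2 : inJ W chi j1 -> inJ W chi j2 -> j1 \in orbitW j2 -> j1 = j2.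
Proof.
rewrite !inJE -orbit_min_eqE => /andP[/eqP j1E _] /andP[/eqP j2E _].
by rewrite j1E j2E => /eqP.
Qed.

Definition Jset : {set tup} := [set j | inJ W chi j].

Lemma chi_trivial_stab_map (tau : 'S_m) j :
  chi_trivial_stab (map_tuple tau j) = chi_trivial_stab j.
Proof.
apply: eq_forallb => s; rewrite act_idx_map.
by rewrite (inj_eq (map_tuple_inj (@perm_inj _ tau))).
Qed.

Lemma sum_Jset_relabel (R : nmodType) (F : tup -> R) (tau : 'S_m) :
  (forall s j, s \in W -> F (act_idx s j) = F j) ->
  \sum_(j in Jset) F (map_tuple tau j) = \sum_(j in Jset) F j.
Proof.
move=> F_inv; pose h j := orbit_min (map_tuple tau j).
have Fh j : F (map_tuple tau j) = F (h j).
  by rewrite /h; case/orbitP: (orbit_min_in (map_tuple tau j)) => s sW <-; rewrite F_inv.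
have h_inj : {in Jset &, injective h}.
  move=> j1 j2; rewrite !inE => J1 J2 /eqP; rewrite orbit_min_eqE.
  case/orbitP => s sW; rewrite tuple_actionE act_idx_map.
  move/(map_tuple_inj (@perm_inj _ tau)) => j1E.
  by apply: inJ_orbit_inj => //; rewrite -j1E; apply: mem_orbit.
have hJ : h @: Jset = Jset.
  apply/eqP; rewrite eqEcard card_in_imset // leqnn andbT.
  apply/subsetP => t /imsetP[j]; rewrite !inE => jJ ->.
  by rewrite inJ_orbit_min chi_trivial_stab_map; case/andP: jJ.
by under eq_bigr do rewrite Fh; rewrite -big_imset // hJ.
Qed.

Local Notation N := (tdim d m).
Local Notation V := (chi_sub W chi m).

Definition tensor_basis (t : tup) : 'rV[K]_N := delta_mx 0 (enum_rank t).

Definition Jval (k : 'I_#|Jset|) : tup := enum_val k.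

Definition monomial_value (x : 'I_m -> K) (t : tup) : K := \prod_(i < d) x (tnth t i).

(* For t = s.j, the class of e_t modulo _chi is chi(s)^-1 times that of e_j; the
   choice of s is irrelevant when chi is trivial on the stabiliser of j. *)
Definition orbit_coef (j t : tup) : K :=
  if [pick s in W | act_idx s j == t] is Some s then (chi s)^-1 else 0.

Definition semisym_proj : 'M[K]_(N, #|Jset|) :=
  \matrix_(a, k) orbit_coef (Jval k) (enum_val a).

Definition semisym_lift : 'M[K]_(#|Jset|, N) := \matrix_k tensor_basis (Jval k).

Definition semisym_diag (x : 'I_m -> K) : 'M[K]_#|Jset| :=
  diag_mx (\row_k monomial_value x (Jval k)).

Lemma row_tensor_basis n (a : 'I_N) (A : 'M[K]_(N, n)) :
  row a A = tensor_basis (enum_val a) *m A.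
Proof. by rewrite rowE /tensor_basis enum_valK. Qed.

Lemma Jval_inJ k : inJ W chi (Jval k).
Proof. by have := enum_valP k; rewrite inE. Qed.

Lemma orbit_coef_act j s :
  chi_trivial_stab j -> s \in W -> orbit_coef j (act_idx s j) = (chi s)^-1.
Proof.
move=> /forallP triv sW; rewrite /orbit_coef.
case: pickP => [s' /andP[s'W /eqP s'j] | /(_ s)]; last by rewrite sW eqxx.
have := triv (s' * s^-1)%g; rewrite groupM ?groupV // act_idxM s'j.
rewrite -act_idxM mulgV act_idx1 eqxx.
by rewrite chiM ?groupV // chiV // => /eqP/divr1_eq ->.
Qed.

Lemma orbit_coef_out j t : t \notin orbitW j -> orbit_coef j t = 0.
Proof.
rewrite /orbit_coef; case: pickP => // s /andP[sW /eqP <-].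
by rewrite -tuple_actionE mem_orbit.
Qed.

Lemma orbit_coef_actr j t s : chi_trivial_stab j -> s \in W ->
  orbit_coef j (act_idx s t) = (chi s)^-1 * orbit_coef j t.
Proof.
move=> triv sW; case: (boolP (t \in orbitW j)) => [/orbitP[u uW <-] | t_out].
  by rewrite tuple_actionE -act_idxM !orbit_coef_act ?groupM // chiM // invfM mulrC.
rewrite !orbit_coef_out ?mulr0 //.
by rewrite -tuple_actionE orbit_actr.
Qed.

Lemma orbit_coef_Jval k k' : orbit_coef (Jval k') (Jval k) = (k == k')%:R.
Proof.
case: eqP => [<- | neq_kk'].
  have triv : chi_trivial_stab (Jval k) by case/andP: (Jval_inJ k).
  by rewrite -{2}(act_idx1 (Jval k)) orbit_coef_act // chi1 invr1.
rewrite orbit_coef_out //; apply: contra_notN neq_kk' => /inJ_orbit_inj.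
by rewrite !Jval_inJ => /(_ isT isT) /enum_val_inj.
Qed.

Lemma tensor_basis_proj t :
  tensor_basis t *m semisym_proj = \row_k orbit_coef (Jval k) t.
Proof. by rewrite -rowE; apply/rowP => k; rewrite !mxE enum_rankK. Qed.

Lemma semisym_lift_proj : semisym_lift *m semisym_proj = 1%:M.
Proof.
apply/row_matrixP => k; rewrite row_mul rowK tensor_basis_proj.
by apply/rowP => k'; rewrite !mxE orbit_coef_Jval.
Qed.

Lemma semisym_proj_full : row_full semisym_proj.
Proof. by apply/row_fullP; exists semisym_lift; apply: semisym_lift_proj. Qed.

Lemma tensor_basis_perm s t :
  tensor_basis t *m perm_tensor K m s = tensor_basis (act_idx s t).
Proof.
rewrite -rowE; apply/rowP => b; rewrite !mxE enum_rankK /=.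
by rewrite eq_sym -(inj_eq enum_val_inj) enum_rankK.
Qed.

Lemma chi_sub_gen s t : s \in W ->
  ((chi s)^-1 *: tensor_basis t - tensor_basis (act_idx s t) <= V)%MS.
Proof.
move=> sW; rewrite -tensor_basis_perm -[tensor_basis t in X in _ *: X]mulmx1.
rewrite scalemxAr -mulmxBr.
by apply: submx_trans (submxMl _ _) _; apply: (sumsmx_sup s).
Qed.

Lemma chi_sub_ker : (V <= kermx semisym_proj)%MS.
Proof.
apply/sumsmx_subP => s sW; rewrite sub_kermx; apply/eqP/row_matrixP => a.
rewrite row0 row_tensor_basis !mulmxA mulmxBr -scalemxAr mulmx1 tensor_basis_perm.
rewrite mulmxBl -scalemxAl !tensor_basis_proj; apply/rowP => k; rewrite !mxE.
by rewrite orbit_coef_actr ?subrr //; case/andP: (Jval_inJ k).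
Qed.

Lemma tensor_basis_sub_chi t : ~~ chi_trivial_stab t -> (tensor_basis t <= V)%MS.
Proof.
case/forallPn => s; rewrite !negb_imply => /andP[sW /andP[/eqP fix_s chi_s]].
have chi_s' : (chi s)^-1 - 1 != 0.
  by rewrite subr_eq0 -[1]invr1 (inj_eq (can_inj invrK)).
have := chi_sub_gen t sW; rewrite fix_s -[X in _ - X]scale1r -scalerBl.
by move/(scalemx_sub ((chi s)^-1 - 1)^-1); rewrite scalerA mulVf ?scale1r.
Qed.

Lemma tensor_basis_proj_lift t : tensor_basis t *m semisym_proj *m semisym_lift =
  \sum_k orbit_coef (Jval k) t *: tensor_basis (Jval k).
Proof.
by rewrite tensor_basis_proj mulmx_sum_row; apply: eq_bigr => k _; rewrite mxE rowK.
Qed.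

Lemma tensor_basis_lift_sub t :
  (tensor_basis t - tensor_basis t *m semisym_proj *m semisym_lift <= V)%MS.
Proof.
rewrite tensor_basis_proj_lift.
case: (pickP (fun k => t \in orbitW (Jval k))) => [k0 t_in | t_out]; last first.
  rewrite big1 ?subr0 => [|k _]; last by rewrite orbit_coef_out ?scale0r ?t_out.
  apply/tensor_basis_sub_chi/negP => triv.
  have jJ : orbit_min t \in Jset by rewrite inE inJ_orbit_min.
  have := t_out (enum_rank_in jJ (orbit_min t)); rewrite /Jval enum_rankK_in //.
  by rewrite orbit_sym orbit_min_in.
rewrite (bigD1 k0) //= big1 ?addr0 => [|k neq_k]; last first.
  rewrite orbit_coef_out ?scale0r //; apply: contra neq_k => t_in'.
  apply/eqP/enum_val_inj/inJ_orbit_inj; rewrite ?Jval_inJ //.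
  by apply: orbit_trans t_in; rewrite orbit_sym.
have triv : chi_trivial_stab (Jval k0) by case/andP: (Jval_inJ k0).
case/orbitP: t_in => s sW <-; rewrite tuple_actionE orbit_coef_act //.
by rewrite -opprB eqmx_opp chi_sub_gen.
Qed.

Lemma kermx_semisym_proj : (kermx semisym_proj == V)%MS.
Proof.
rewrite /eqmx chi_sub_ker andbT.
set Q := semisym_proj *m semisym_lift.
have -> : kermx semisym_proj = kermx semisym_proj *m (1%:M - Q).
  by rewrite mulmxBr mulmx1 mulmxA mulmx_ker mul0mx subr0.
apply: submx_trans (submxMl _ _) _; apply/row_subP => a.
by rewrite row_tensor_basis mulmxBr mulmx1 mulmxA tensor_basis_lift_sub.
Qed.

Lemma semisym_proj_quotient : semisym_quotient W chi semisym_proj.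
Proof. by split; [apply: semisym_proj_full | apply: kermx_semisym_proj]. Qed.

Lemma tensor_map_diag (x : 'I_m -> K) :
  tensor_map d (diag_mx (\row_i x i)) = diag_mx (\row_a monomial_value x (enum_val a)).
Proof.
apply/matrixP => a b; rewrite !mxE; under eq_bigr do rewrite !mxE.
have [<- | neq_ab] := eqVneq a b.
  by rewrite mulr1n; apply: eq_bigr => i _; rewrite eqxx mulr1n.
have [i neq_i] : exists i, tnth (enum_val a) i != tnth (enum_val b) i.
  apply/existsP; apply: contraR neq_ab => /existsPn same.
  by apply/eqP/enum_val_inj/eq_from_tnth => i; apply/eqP/negPn/same.
by rewrite mulr0n (bigD1 i) //= (negbTE neq_i) mulr0n mul0r.
Qed.

Lemma semisym_proj_diag (x : 'I_m -> K) :
  induced_map semisym_proj (diag_mx (\row_i x i)) (semisym_diag x).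
Proof.
rewrite /induced_map tensor_map_diag mul_diag_mx mul_mx_diag.
apply/matrixP => a k; rewrite !mxE.
have [/orbitP[s _ <-] | a_out] := boolP (enum_val a \in orbitW (Jval k)).
  by rewrite /monomial_value prod_act_idx mulrC.
by rewrite orbit_coef_out // mul0r mulr0.
Qed.

Lemma mxtrace_semisym_diag (x : 'I_m -> K) :
  \tr (semisym_diag x) = \sum_(j in Jset) monomial_value x j.
Proof.
rewrite mxtrace_diag (big_enum_val (A := mem Jset)).
by apply: eq_bigr => k _; rewrite mxE.
Qed.

Lemma semisym_trace (x : 'I_m -> K) r (q : 'M[K]_(N, r)) (L : 'M[K]_r) :
  semisym_quotient W chi q -> induced_map q (diag_mx (\row_i x i)) L ->
  \tr L = \sum_(j in Jset) monomial_value x j.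
Proof.
move=> [q_full ker_q] qL; rewrite -mxtrace_semisym_diag.
apply: (mxtrace_quotient_eq q_full semisym_proj_full _ qL (semisym_proj_diag x)).
apply/eqmxP; apply: eqmx_trans (eqmxP ker_q) (eqmx_sym (eqmxP kermx_semisym_proj)).
Qed.

End IndexTuples.
End SemiSymmetricPower.

Lemma msymXU (R : nzRingType) n (s : 'S_n) (i : 'I_n) :
  msym s ('X_i : {mpoly R[n]}) = 'X_(s i).
Proof. by rewrite /msym mmapX mmap1U. Qed.

Section GeneratingPolynomials.
Variables (K : fieldType) (d : nat) (W : {group 'S_d}) (chi : 'S_d -> K).

Lemma g_nE n :
  g_n W chi n = \sum_(j in Jset W chi n.+1) \prod_(i < d) 'X_(tnth j i).
Proof. by apply: eq_bigl => j; rewrite inE. Qed.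

Lemma g_n_symmetric n : one_dim_char W chi -> g_n W chi n \is symmetric.
Proof.
move=> chi_char; apply/issymP => tau; rewrite !g_nE rmorph_sum /=.
pose F j := \prod_(i < d) ('X_(tnth j i) : {mpoly K[n.+1]}).
have F_inv s j : s \in W -> F (act_idx s j) = F j.
  by move=> _; apply: (prod_act_idx (fun i => 'X_i)).
rewrite -(sum_Jset_relabel chi_char tau F_inv); apply: eq_bigr => j _.
by rewrite rmorph_prod; apply: eq_bigr => i _; rewrite /= msymXU tnth_map.
Qed.

Lemma g_n_restrict n :
  g_n W chi n.+1 \mPo [tuple (if (i < n.+1)%N then 'X_(inord i) else 0)
                      : {mpoly K[n.+1]} | i < n.+2]
  = g_n W chi n.
Proof.
rewrite /g_n rmorph_sum /=; under eq_bigr do rewrite rmorph_prod /=.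
under eq_bigr do under eq_bigr do rewrite comp_mpolyXU -tnth_nth tnth_mktuple.
rewrite (bigID (fun j : d.-tuple 'I_n.+2 => [forall i, tnth j i < n.+1]%N)) /=.
rewrite [X in _ + X]big1 ?addr0 => [|j /andP[_ /forallPn[i j_i]]]; last first.
  by rewrite (bigD1 i) //= (negbTE j_i) mul0r.
pose widen : d.-tuple 'I_n.+1 -> d.-tuple 'I_n.+2 :=
  map_tuple (widen_ord (leqnSn n.+1)).
rewrite (reindex_onto widen (map_tuple (fun i : 'I_n.+2 => inord i : 'I_n.+1))) /=.
  apply: eq_big => [j | j _]; last first.
    by apply: eq_bigr => i _; rewrite tnth_map /= ltn_ord inord_val.
  rewrite inJ_map => [|a b]; last by rewrite !leEord.
  have -> : [forall i, tnth (widen j) i < n.+1]%N.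
    by apply/forallP => i; rewrite tnth_map /= ltn_ord.
  have -> : map_tuple (fun i : 'I_n.+2 => inord i : 'I_n.+1) (widen j) == j.
    by apply/eqP/eq_from_tnth => i; rewrite !tnth_map /= inord_val.
  by rewrite !andbT.
move=> j /andP[_ /forallP j_lt]; apply: eq_from_tnth => i.
by rewrite !tnth_map; apply: val_inj; rewrite /= inordK.
Qed.

Lemma g_spec_g_n n : g_spec W chi n = g_n W chi n.
Proof.
apply: eq_bigl => j; apply: inJ_map => a b.
by rewrite leEord leEnat.
Qed.

Lemma meval_g_n n (x : 'I_n.+1 -> K) :
  (g_n W chi n).@[x] = \sum_(j in Jset W chi n.+1) monomial_value x j.
Proof.
rewrite g_nE rmorph_sum; apply: eq_bigr => j _.
by rewrite rmorph_prod; apply: eq_bigr => i _; rewrite /= mevalXU.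
Qed.

End GeneratingPolynomials.

Unset Implicit Arguments.

Theorem lemma2p1p1 (K : fieldType) (d : nat) (W : {group 'S_d}) (chi : 'S_d -> K) :
  [pchar K] =i pred0 ->
  one_dim_char W chi ->
  (* each g_n is symmetric *)
  (forall n : nat, g_n W chi n \is symmetric) /\
  (* compatibility: g_{n+1}(x_0,...,x_n,0) = g_n(x_0,...,x_n) *)
  (forall n : nat,
     g_n W chi n.+1 \mPo [tuple (if (i < n.+1)%N then 'X_(inord i) else 0)
                         : {mpoly K[n.+1]} | i < n.+2]
     = g_n W chi n) /\
  (* g(chi; x_0,...,x_n,0,0,...) = g_n(chi; x_0,...,x_n) *)
  (forall n : nat, g_spec W chi n = g_n W chi n) /\
  (* characteristic of [chi]^d(-): trace of [chi]^d(diag(x_0,...,x_n)) *)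
  (forall (n : nat) (x : 'I_n.+1 -> K),
     (exists (r : nat) (q : 'M[K]_(tdim d n.+1, r)) (L : 'M[K]_r),
         semisym_quotient W chi q /\ induced_map q (diag_mx (\row_i x i)) L) /\
     (forall (r : nat) (q : 'M[K]_(tdim d n.+1, r)) (L : 'M[K]_r),
         semisym_quotient W chi q -> induced_map q (diag_mx (\row_i x i)) L ->
         \tr L = (g_n W chi n).@[x])).
Proof.
(* The argument works in any characteristic. *)
move=> _ chi_char; split; [|split; [|split]].
- by move=> n; apply: g_n_symmetric.
- exact: g_n_restrict.
- exact: g_spec_g_n.
move=> n x; split.
  exists #|Jset W chi n.+1|, (semisym_proj W chi n.+1), (semisym_diag W chi x).
  by split; [apply: semisym_proj_quotient | apply: semisym_proj_diag].
by move=> r q L q_quot qL; rewrite meval_g_n (semisym_trace chi_char q_quot qL).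
Qed.
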